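(* Let $K\ge 2$ and let $\mathbf{d}_1,\mathbf{d}_2\in\mathbb{R}^K$ be the vector-valued signed distance values at the two endpoints of a segment, both satisfying $\min^{(1)}(\mathbf{d})+\min^{(2)}(\mathbf{d})\ge 0$, and suppose the values along the segment are obtained by linear interpolation, $\mathbf{d}_\alpha=(1-\alpha)\mathbf{d}_1+\alpha\mathbf{d}_2$ for $\alpha\in[0,1]$ (as done by a linearly interpolating meshing algorithm), the surface of object $k$ being located where the $k$-th component vanishes. Then there are at most two object surfaces between the two endpoints, and these surfaces do not cross. Precisely: if neither $\mathbf{d}_1$ nor $\mathbf{d}_2$ has a zero entry, then there are at most two indices $k$ whose components have strictly opposite signs at the two endpoints; and if there are two such indices $i\neq j$, with $(\mathbf{d}_1)_i<0$ and $(\mathbf{d}_2)_j<0$, then the zero-crossing parameters $\alpha_i=\frac{-(\mathbf{d}_1)_i}{(\mathbf{d}_2)_i-(\mathbf{d}_1)_i}$ and $\alpha_j=\frac{-(\mathbf{d}_1)_j}{(\mathbf{d}_2)_j-(\mathbf{d}_1)_j}$ satisfy $\alpha_i\le\alpha_j$ (the surfaces are disjoint or at most touch). If an endpoint vector has a zero entry, then that vector has no negative entry, i.e. that endpoint lies on the surface of one or more objects and outside every other object.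
   Context: For a vector $\mathbf{d}\in\mathbb{R}^K$, $\min^{(n)}(\mathbf{d})$ denotes the $n$-th smallest entry of $\mathbf{d}$ (counted with multiplicity). The $k$-th component of a vector-valued signed distance field is the signed distance to object $k$ (negative inside, positive outside), so object $k$'s surface is its zero set. *)

From mathcomp Require Import all_boot all_order all_algebra.
Set Implicit Arguments. Unset Strict Implicit. Unset Printing Implicit Defensive.
Import Order.TTheory GRing.Theory Num.Theory.
Local Open Scope ring_scope.

(* min^(n)(d): the n-th smallest entry of d (n >= 1), counted with
   multiplicity: the (n-1)-th element (0-based) of the sorted list of entries. *)
Definition nth_min (R : realDomainType) (K : nat) (n : nat) (d : 'I_K -> R) : R :=
  nth 0 (sort <=%R [seq d k | k <- enum 'I_K]) n.-1.

Definition interp (R : realDomainType) (K : nat) (d1 d2 : 'I_K -> R) (a : R) : 'I_K -> R :=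
  fun k => (1 - a) * d1 k + a * d2 k.

Definition cross_param (R : realFieldType) (K : nat) (d1 d2 : 'I_K -> R) (k : 'I_K) : R :=
  - d1 k / (d2 k - d1 k).

Definition sign_change (R : realDomainType) (K : nat) (d1 d2 : 'I_K -> R) (k : 'I_K) : bool :=
  d1 k * d2 k < 0.

(* Both smallest entries of d are bounded by any pair d_i, d_j with i <> j, so
   min^(1) + min^(2) >= 0 forces d_i + d_j >= 0 whenever i <> j.  Hence d has at
   most one negative entry, and none at all when some entry vanishes.  A strict
   sign change of component k puts a negative entry at one endpoint, so there
   are at most two of them; for two crossings a = d1_i < 0 < b = d2_i and
   c = d1_j > 0 > e = d2_j, the pair bounds -a <= c and -e <= b give a e <= b c,
   which is alpha_i <= alpha_j after clearing denominators. *)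
From mathcomp Require Import all_boot all_order all_algebra.
From mathcomp Require Import lra.
Set Implicit Arguments. Unset Strict Implicit. Unset Printing Implicit Defensive.
Import Order.TTheory GRing.Theory Num.Theory.
Local Open Scope ring_scope.

Lemma count_enum_cards (T : finType) (P : pred T) : count P (enum T) = #|[set x | P x]|.
Proof. by rewrite cardsE cardE enumT /enum_mem size_filter. Qed.

Section NthMin.

Variables (R : realDomainType) (K : nat).
Implicit Types (d : 'I_K -> R) (x : R).

Lemma nth_min_le n d x :
  (n.-1 < #|[set k | (d k <= x)%R]|)%N -> nth_min n d <= x.
Proof.
move=> n_lt; apply: nth_count_le; first exact/sort_sorted/le_total.
by rewrite (permP (permEl (perm_sort _ _))) count_map count_enum_cards.
Qed.

Lemma nth_min12_le_add d i j : i != j -> nth_min 1 d + nth_min 2 d <= d i + d j.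
Proof.
wlog dij : i j / d i <= d j.
  move=> wlog_le ij; have [dij|/ltW dji] := lerP (d i) (d j).
    exact: wlog_le.
  by rewrite [d i + _]addrC wlog_le // eq_sym.
move=> ij; apply: lerD; apply: nth_min_le.
  by rewrite card_gt0; apply/set0Pn; exists i; rewrite inE.
have sub_ij : [set i; j] \subset [set k | d k <= d j].
  by apply/subsetP => k; rewrite !inE => /orP[] /eqP->.
by apply: leq_trans (subset_leq_card sub_ij); rewrite cards2 ij.
Qed.

End NthMin.

Section TwoSmallestSumNonneg.

Variables (R : realDomainType) (K : nat) (d : 'I_K -> R).
Hypothesis nth_min12_ge0 : 0 <= nth_min 1 d + nth_min 2 d.

Lemma addr_ge0_neq i j : i != j -> 0 <= d i + d j.
Proof. by move=> ij; exact: le_trans nth_min12_ge0 (nth_min12_le_add d ij). Qed.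

Lemma card_neg_le1 : (#|[set k | (d k < 0)%R]| <= 1)%N.
Proof.
apply/card_le1_eqP => i j; rewrite !inE => di_lt0 dj_lt0.
apply: contraTeq (ltrD di_lt0 dj_lt0) => ij.
by rewrite addr0 -leNgt addr_ge0_neq // eq_sym.
Qed.

Lemma ge0_of_root k : d k = 0 -> forall m, 0 <= d m.
Proof.
move=> dk0 m; have [<-|km] := eqVneq k m; first by rewrite dk0.
by have := addr_ge0_neq km; rewrite dk0 add0r.
Qed.

End TwoSmallestSumNonneg.

Lemma sign_change_neg (R : realDomainType) (K : nat) (d1 d2 : 'I_K -> R) k :
  sign_change d1 d2 k -> (d1 k < 0) || (d2 k < 0).
Proof.
apply: contraTT; rewrite negb_or -!leNgt => /andP[d1k_ge0 d2k_ge0].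
exact: mulr_ge0.
Qed.

Lemma card_sign_change_le2 (R : realDomainType) (K : nat) (d1 d2 : 'I_K -> R) :
  0 <= nth_min 1 d1 + nth_min 2 d1 -> 0 <= nth_min 1 d2 + nth_min 2 d2 ->
  (#|[set k | sign_change d1 d2 k]| <= 2)%N.
Proof.
move=> d1_ge0 d2_ge0.
have sub_neg : [set k | sign_change d1 d2 k]
    \subset [set k | (d1 k < 0)%R] :|: [set k | (d2 k < 0)%R].
  by apply/subsetP => k; rewrite !inE; exact: sign_change_neg.
apply: leq_trans (subset_leq_card sub_neg) _.
apply: leq_trans (leq_card_setU _ _) _.
by rewrite -[2%N]/(1 + 1)%N leq_add // card_neg_le1.
Qed.

Lemma cross_param_le (R : realFieldType) (K : nat) (d1 d2 : 'I_K -> R) i j :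
  d1 i < 0 < d2 i -> d2 j < 0 < d1 j ->
  0 <= d1 i + d1 j -> 0 <= d2 i + d2 j ->
  cross_param d1 d2 i <= cross_param d1 d2 j.
Proof.
rewrite /cross_param; move: (d1 i) (d2 i) (d1 j) (d2 j) => a b c e.
move=> /andP[a_lt0 b_gt0] /andP[e_lt0 c_gt0] ac_ge0 be_ge0.
have ba_gt0 : 0 < b - a by rewrite subr_gt0 (lt_trans a_lt0).
have ce_gt0 : 0 < c - e by rewrite subr_gt0 (lt_trans e_lt0).
rewrite [X in _ <= X]mulNr -mulrN -invrN opprB.
rewrite ler_pdivrMr // mulrAC ler_pdivlMr //.
have : (- a) * (- e) <= c * b by apply: ler_pM; lra.
nra.
Qed.

Theorem mainTheorem4 (R : realFieldType) (K : nat) (d1 d2 : 'I_K -> R) :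
  (2 <= K)%N ->
  0 <= nth_min 1 d1 + nth_min 2 d1 ->
  0 <= nth_min 1 d2 + nth_min 2 d2 ->
  [/\ ((forall k, d1 k != 0) -> (forall k, d2 k != 0) ->
        (#|[set k | sign_change d1 d2 k]| <= 2)%N /\
        (forall i j : 'I_K, i != j ->
           sign_change d1 d2 i -> sign_change d1 d2 j ->
           d1 i < 0 -> d2 j < 0 ->
           cross_param d1 d2 i <= cross_param d1 d2 j)),
      ((exists k, d1 k = 0) -> forall k, 0 <= d1 k) &
      ((exists k, d2 k = 0) -> forall k, 0 <= d2 k)].
Proof.
move=> _ d1_ge0 d2_ge0.
split=> [_ _|[k /(ge0_of_root d1_ge0)]|[k /(ge0_of_root d2_ge0)]] //.
split=> [|i j ij si sj d1i_lt0 d2j_lt0]; first exact: card_sign_change_le2.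
apply: cross_param_le; rewrite ?addr_ge0_neq //.
  by rewrite d1i_lt0 -(nmulr_rlt0 _ d1i_lt0).
by rewrite d2j_lt0 -(nmulr_rlt0 _ d2j_lt0) mulrC.
Qed.
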